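(* There exist $B_n$-invariant homogeneous polynomials $t_1(p),\dots,t_n(p)$ with $\deg t_k=2k$, forming a coordinate system on the orbit space, in which the cometric $\eta$ is constant and moreover $\eta^{ij}(t)=\delta_{i,n+1-j}$ for all $i,j=1,\dots,n$.
   Context: $n\ge2$. $B_n$ acts on $\mathbb{C}^n$ (coordinates $p_1,\dots,p_n$) by permutations and sign changes. $u_k=\sum_{1\le i_1<\dots<i_k\le n}p_{i_1}^2\cdots p_{i_k}^2$ ($k=1,\dots,n$), $u_0=1$, $u_k=0$ for $k<0$. Let $g^{ij}(u)=\frac{1}{4(n-1)}\sum_{k,l}\frac{1-\delta^{kl}}{p_kp_l}\frac{\partial u_i}{\partial p_k}\frac{\partial u_j}{\partial p_l}$ (normalized intersection form) and $\eta^{ij}(u)=\frac{\partial g^{ij}}{\partial u_{n-1}}(u)=\frac{2n-i-j}{n-1}u_{i+j-n-1}$, a flat contravariant metric on the orbit space with constant nonzero determinant. *)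

From HB Require Import structures.
From mathcomp Require Import all_boot all_order all_algebra all_fingroup.
From mathcomp Require Export mpoly.
Set Implicit Arguments. Unset Strict Implicit. Unset Printing Implicit Defensive.
Import Order.TTheory GRing.Theory Num.Theory.
Local Open Scope ring_scope.

(* Polynomials in the coordinates p_1..p_n are {mpoly C[n]}, variable 'X_i = p_(i+1).
   Polynomials on the orbit space in the coordinates u_1..u_n are also {mpoly C[n]},
   variable 'X_a = u_(a+1). *)

Definition uB (C : comNzRingType) (n : nat) (k : 'I_n) : {mpoly C[n]} :=
  comp_mpoly [tuple ('X_i ^+ 2 : {mpoly C[n]}) | i < n] (mesym n C k.+1).

Definition uTuple (C : comNzRingType) (n : nat) : n.-tuple {mpoly C[n]} :=
  [tuple uB C k | k < n].

(* action of the element (s, e) of B_n (permutation s, signs (-1)^(e i)) on polynomials in p: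
   p_(i) |-> (-1)^(e i) p_(s i) *)
Definition Bn_act (C : comNzRingType) (n : nat) (s : 'S_n) (e : 'I_n -> bool)
  (t : {mpoly C[n]}) : {mpoly C[n]} :=
  comp_mpoly [tuple ((-1) ^+ e i *: 'X_(s i) : {mpoly C[n]}) | i < n] t.

(* u_m as an element of the orbit-space polynomial ring, for an integer m given as
   m = k - (n+1) with k : nat : u_0 = 1, u_m = 0 for m < 0, u_m = 'X_(m-1) for 1 <= m <= n *)
Definition uShift (C : comNzRingType) (n k : nat) : {mpoly C[n]} :=
  if (k <= n)%N then 0
  else if k == n.+1 then 1
  else \sum_(a < n | (a + n.+2 == k)%N) 'X_a.

Definition etaU (C : fieldType) (n : nat) (a b : 'I_n) : {mpoly C[n]} :=
  ((2 * n - (a.+1 + b.+1))%:R / (n - 1)%:R) *: uShift C n (a.+1 + b.+1).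

Definition etaT (C : fieldType) (n : nat) (T : 'I_n -> {mpoly C[n]}) (i j : 'I_n)
  : {mpoly C[n]} :=
  \sum_(a < n) \sum_(b < n) mderiv a (T i) * mderiv b (T j) * etaU C a b.

(* Write [E = 1 + Y] with [Y = sum_(1 <= k <= n) u_k z^k].  The flat coordinates
   are [t_i = [z^(i+1)] int_0^Y (1 + y)^(alpha_i) dy] with
   [alpha_i = (i + 1 - n) / (n - 1)], so that [dt_i/du_a = [z^(i-a)] E^(alpha_i)].
   Since [eta^(ab)] is the coefficient of [z^(a+b+2)] in
   [z^(n+1) (E - z E' / (n - 1))], reversing the two convolutions gives
   [eta^(ij)(t) = [z^(i+j+1-n)] E^(alpha_i) E^(alpha_j) (E - z E' / (n - 1))],
   and [E^g (E - c z E') = E^(g+1) - c/(g+1) z (E^(g+1))'] has no [z^m] term for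
   [m > 0] when [g + 1 = m c].  Only finitely many coefficients occur, so the
   binomial series can be truncated to polynomials.
   Giving [u_k] the weight [k], [t_i] is weighted homogeneous of weight [i + 1]
   with coefficient [1] at [u_(i+1)]: the change of coordinates is triangular,
   hence polynomially invertible.  Invariance and degrees come from
   [u_k = e_k(p_1^2, ..., p_n^2)]. *)

From HB Require Import structures.
From mathcomp Require Import all_boot all_order all_algebra all_fingroup.
From mathcomp Require Import mpoly.
From mathcomp Require Import ring zify.
Import GRing.Theory Num.Theory.
Set Implicit Arguments. Unset Strict Implicit.
Local Open Scope ring_scope.

Section ZeroBelow.
Variable S : comNzRingType.
Implicit Types (p q : {poly S}) (N : nat).

Definition zero_below N p := forall k, (k < N)%N -> p`_k = 0.

Lemma zero_belowXnM N q : zero_below N ('X^N * q).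
Proof. by move=> k kN; rewrite coefXnM kN. Qed.

Lemma zero_belowMr N p q : zero_below N p -> zero_below N (p * q).
Proof.
move=> p0 k kN; rewrite coefM big1 // => j _.
by rewrite p0 ?mul0r // (leq_ltn_trans _ kN) // -ltnS.
Qed.

Lemma zero_belowMl N p q : zero_below N p -> zero_below N (q * p).
Proof. by rewrite mulrC; apply: zero_belowMr. Qed.

Lemma zero_belowD N p q : zero_below N p -> zero_below N q -> zero_below N (p + q).
Proof. by move=> p0 q0 k kN; rewrite coefD p0 // q0 // addr0. Qed.

Lemma zero_belowXM N p : zero_below N p -> zero_below N.+1 ('X * p).
Proof. by move=> p0 [|k] kN; rewrite coefXM //= p0. Qed.

End ZeroBelow.

Section TruncatedBinomialSeries.
Variables (F : numFieldType) (S : comNzRingType) (f : {rmorphism F -> S}).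
Variable Y0 : {poly S}.
Local Notation cst := (polyC \o f).

Definition Y : {poly S} := 'X * Y0.
Definition E : {poly S} := 1 + Y.

Definition gbinom (al : F) (j : nat) : F := (\prod_(l < j) (al - l%:R)) / j`!%:R.

Lemma gbinom0 al : gbinom al 0 = 1.
Proof. by rewrite /gbinom big_ord0 fact0 divr1. Qed.

Lemma gbinomS al j : gbinom al j.+1 * j.+1%:R = gbinom al j * (al - j%:R).
Proof.
rewrite /gbinom big_ord_recr /= factS natrM.
have j1_neq0 : (j.+1%:R : F) != 0 by rewrite pnatr_eq0.
have jfact_neq0 : (j`!%:R : F) != 0 by rewrite pnatr_eq0 -lt0n fact_gt0.
by field; rewrite jfact_neq0 addrC natr1 j1_neq0.
Qed.

Definition trunc_pow (al : F) (N : nat) : {poly S} :=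
  \sum_(j < N) cst (gbinom al j) * Y ^+ j.

Definition trunc_pow_prim (al : F) (N : nat) : {poly S} :=
  \sum_(j < N) cst (gbinom al j / j.+1%:R) * Y ^+ j.+1.

Lemma trunc_powS al N : trunc_pow al N.+1 = trunc_pow al N + cst (gbinom al N) * Y ^+ N.
Proof. by rewrite /trunc_pow big_ord_recr. Qed.

Lemma deriv_E : E^`() = Y^`().
Proof. by rewrite /E derivD -polyC1 derivC add0r. Qed.

Lemma coef0Y : Y`_0 = 0.
Proof. by rewrite /Y coefXM. Qed.

Lemma coef0E : E`_0 = 1.
Proof. by rewrite /E coefD coef1 coef0Y addr0. Qed.

Lemma coef0_trunc_pow al N : (trunc_pow al N.+1)`_0 = 1.
Proof.
rewrite /trunc_pow big_ord_recl coefD gbinom0 /= rmorph1 mul1r expr0 coef1 /=.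
rewrite coef_sum big1 ?addr0 // => j _.
by rewrite coefCM /Y exprMn coefXnM mulr0.
Qed.

Lemma trunc_pow_ode al N :
  E * (trunc_pow al N.+1)^`() - cst al * Y^`() * trunc_pow al N.+1 =
  cst ((N%:R - al) * gbinom al N) * (Y^`() * Y ^+ N).
Proof.
elim: N => [|N IH].
  rewrite /trunc_pow big_ord1 gbinom0 rmorph1 expr0 mulr1 -polyC1 derivC polyC1.
  by rewrite mulr0 sub0r !mulr1 sub0r rmorphN mulNr.
have step : cst (gbinom al N.+1) * N.+1%:R = cst (gbinom al N) * (cst al - N%:R).
  by rewrite -!(rmorph_nat cst) -rmorphB -!rmorphM gbinomS.
have cstM_gbinom k : cst ((k%:R - al) * gbinom al k) = (k%:R - cst al) * cst (gbinom al k).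
  by rewrite rmorphM rmorphB rmorph_nat.
rewrite trunc_powS derivD mulrDr deriv_mulC deriv_exp mulrDr opprD addrACA IH.
rewrite !cstM_gbinom succnK /E exprS -mulr_natr.
move: step; set b0 := cst (gbinom al N); set b1 := cst (gbinom al N.+1) => step.
transitivity ((N%:R - cst al) * b0 * (Y^`() * Y ^+ N) + b1 * N.+1%:R * (Y^`() * Y ^+ N)
  + b1 * (N.+1%:R - cst al) * Y^`() * Y * Y ^+ N); first by ring.
by rewrite step; ring.
Qed.

Lemma zero_below_pow_ode al N :
  zero_below N (E * (trunc_pow al N.+1)^`() - cst al * Y^`() * trunc_pow al N.+1).
Proof.
by rewrite trunc_pow_ode /Y exprMn; apply: zero_belowMl; rewrite mulrCA; apply: zero_belowXnM.
Qed.

Definition Qc (c : F) : {poly S} := E - cst c * ('X * E^`()).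

Lemma coef_trunc_pow2_Qc (al be c : F) N m : (m < N)%N ->
  al + be + 1 = m%:R * c ->
  (trunc_pow al N.+1 * trunc_pow be N.+1 * Qc c)`_m = (m == 0)%:R.
Proof.
move=> mN albe.
set A := trunc_pow al N.+1 * trunc_pow be N.+1.
have A_ode : zero_below N (E * A^`() - cst (al + be) * E^`() * A).
  have -> : E * A^`() - cst (al + be) * E^`() * A =
      (E * (trunc_pow al N.+1)^`() - cst al * Y^`() * trunc_pow al N.+1) * trunc_pow be N.+1
    + trunc_pow al N.+1 * (E * (trunc_pow be N.+1)^`() - cst be * Y^`() * trunc_pow be N.+1).
    by rewrite /A derivM deriv_E (rmorphD cst); ring.
  by apply: zero_belowD; [apply: zero_belowMr | apply: zero_belowMl]; apply: zero_below_pow_ode.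
have AE_ode : zero_below N.+1 ('X * (A * E)^`() - cst (al + be + 1) * ('X * A * E^`())).
  have -> : 'X * (A * E)^`() - cst (al + be + 1) * ('X * A * E^`()) =
      'X * (E * A^`() - cst (al + be) * E^`() * A).
    by rewrite derivM (rmorphD cst) (rmorph1 cst); ring.
  exact: zero_belowXM.
have /eqP := AE_ode m (ltnW mN).
rewrite coefB coefCM subr_eq0 coefXM => /eqP coef_AE.
have -> : A * Qc c = A * E - cst c * ('X * A * E^`()) by rewrite /Qc; ring.
rewrite coefB coefCM.
case: m mN albe coef_AE => [|m] mN albe coef_AE.
  rewrite -mulrA coefXM /= mulr0 subr0 coef0M coef0E mulr1 coef0M.
  by rewrite !coef0_trunc_pow mulr1.
have m1_neq0 : (m.+1%:R : F) != 0 by rewrite pnatr_eq0.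
have cancel_m1 (x : S) : f m.+1%:R^-1 * (x *+ m.+1) = x.
  by rewrite -[x *+ _]mulr_natl mulrA -(rmorph_nat f) -rmorphM mulVf ?rmorph1 ?mul1r.
rewrite /= coef_deriv in coef_AE.
rewrite -[(A * E)`_m.+1]cancel_m1 coef_AE albe rmorphM rmorph_nat mulr_natl mulrnAl.
by rewrite cancel_m1 subrr.
Qed.

End TruncatedBinomialSeries.

Section CoefficientAssembly.
Variables (S : comNzRingType) (n : nat).

(* Weighting by [z^(n-1-a)] reverses the index [a]: this turns the double sum of
   [sum_coefXnM_triple] into a single coefficient of a product. *)
Lemma sum_coefXnM_rev (G : {poly S}) (i : 'I_n) :
  \sum_(a < n) (('X^(a.+1) * G)`_i.+1)%:P * 'X^(n.-1 - a) =
  'X^(n.-1 - i) * take_poly i.+1 G.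
Proof.
have le_in : (i.+1 <= n)%N := ltn_ord i.
transitivity (\sum_(a < i.+1) (G`_(i - a))%:P * 'X^(n.-1 - a)).
  rewrite (big_ord_widen _ (fun a => (G`_(i - a))%:P * 'X^(n.-1 - a)) le_in).
  rewrite [RHS]big_mkcond; apply: eq_bigr => a _.
  by rewrite coefXnM !ltnS subSS; case: (ltnP i a); rewrite ?mul0r.
rewrite (reindex_inj rev_ord_inj) /take_poly poly_def mulr_sumr.
apply: eq_bigr => k _.
have le_ki : (k <= i)%N by rewrite -ltnS.
have -> : nat_of_ord (rev_ord k) = (i - k)%N by rewrite /= subSS.
rewrite subKn // mul_polyC -scalerAr -exprD.
by congr (_ *: 'X^_); lia.
Qed.

Lemma coef_take_polyM (G H : {poly S}) k m : (m < k)%N ->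
  (take_poly k G * H)`_m = (G * H)`_m.
Proof.
move=> lt_mk; rewrite !coefM; apply: eq_bigr => l _.
by rewrite coef_take_poly (leq_ltn_trans _ lt_mk) // -ltnS.
Qed.

Lemma sum_coefXnM_triple (G H Q : {poly S}) (i j : 'I_n) :
  \sum_(a < n) \sum_(b < n)
     ('X^(a.+1) * G)`_i.+1 * ('X^(b.+1) * H)`_j.+1 * ('X^(n.+1) * Q)`_(a.+1 + b.+1) =
  if (i + j + 1 < n)%N then 0 else (G * H * Q)`_(i + j + 1 - n).
Proof.
have lt_in := ltn_ord i; have lt_jn := ltn_ord j.
pose x := fun a : 'I_n => ('X^(a.+1) * G)`_i.+1.
pose y := fun b : 'I_n => ('X^(b.+1) * H)`_j.+1.
set W := 'X^(n.+1) * Q.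
transitivity (((\sum_(a < n) (x a)%:P * 'X^(n.-1 - a)) *
               (\sum_(b < n) (y b)%:P * 'X^(n.-1 - b)) * W)`_(2 * n)).
  rewrite -mulrA mulr_suml coef_sum; apply: eq_bigr => a _.
  rewrite mulr_suml mulr_sumr coef_sum; apply: eq_bigr => b _.
  have lt_an := ltn_ord a; have lt_bn := ltn_ord b.
  have -> : (x a)%:P * 'X^(n.-1 - a) * ((y b)%:P * 'X^(n.-1 - b) * W) =
            (x a * y b)%:P * ('X^(n.-1 - a + (n.-1 - b)) * W).
    by rewrite polyCM exprD; ring.
  rewrite [RHS]coefCM [in RHS]coefXnM ifN; last by rewrite -leqNgt; lia.
  by congr (_ * W`__); lia.
rewrite !sum_coefXnM_rev /W.
have -> : 'X^(n.-1 - i) * take_poly i.+1 G * ('X^(n.-1 - j) * take_poly j.+1 H) *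
          ('X^(n.+1) * Q) =
          'X^(n.-1 - i + (n.-1 - j) + n.+1) * (take_poly i.+1 G * (take_poly j.+1 H * Q)).
  by rewrite !exprD; ring.
rewrite coefXnM; case: (ltnP (i + j + 1) n) => [lt_ijn|le_nij].
  by rewrite ifT //; lia.
rewrite ifN; last by rewrite -leqNgt; lia.
have -> : (2 * n - (n.-1 - i + (n.-1 - j) + n.+1) = i + j + 1 - n)%N by lia.
rewrite coef_take_polyM; last by lia.
rewrite mulrCA coef_take_polyM; last by lia.
by rewrite mulrCA mulrA.
Qed.

End CoefficientAssembly.

Section PartialDerivatives.
Variables (K : comNzRingType) (n : nat).
Local Notation R := {mpoly K[n]}.

Definition pderiv (a : 'I_n) (p : {poly R}) : {poly R} := map_poly (mderiv a) p.

Lemma coef_pderiv (a : 'I_n) p k : (pderiv a p)`_k = mderiv a p`_k.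
Proof. by rewrite coef_map_id0 ?mderiv0. Qed.

Lemma pderiv_sum (a : 'I_n) (I : Type) (r : seq I) (P : pred I) (F : I -> {poly R}) :
  pderiv a (\sum_(i <- r | P i) F i) = \sum_(i <- r | P i) pderiv a (F i).
Proof. exact: raddf_sum. Qed.

Lemma pderivM (a : 'I_n) (p q : {poly R}) :
  pderiv a (p * q) = pderiv a p * q + p * pderiv a q.
Proof.
apply/polyP => k; rewrite coef_pderiv coefD !coefM.
rewrite (big_morph _ (mderivD a) (mderiv0 _ a)) -big_split.
by apply: eq_bigr => j _; rewrite mderivM !coef_pderiv.
Qed.

Lemma pderivC (a : 'I_n) (c : R) : pderiv a c%:P = (mderiv a c)%:P.
Proof. exact: map_polyC. Qed.

Lemma pderivXn (a : 'I_n) k : pderiv a 'X^k = 0.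
Proof.
apply/polyP => j; rewrite coef_pderiv coefXn coef0.
by case: (j == k); rewrite /= ?mderiv0 // -mpolyC1 mderivC.
Qed.

Lemma pderiv_exp (a : 'I_n) (p : {poly R}) j :
  pderiv a (p ^+ j.+1) = pderiv a p * p ^+ j *+ j.+1.
Proof.
elim: j => [|j IH]; first by rewrite expr0 mulr1.
by rewrite exprS pderivM IH mulrnAr mulrCA -exprS [RHS]mulrS.
Qed.

Lemma mderivXU (a b : 'I_n) : mderiv a ('X_b : R) = (b == a)%:R.
Proof.
rewrite mderivX mnm1E; case: eqP => [->|_]; last by rewrite scale0r.
have -> : (U_(a) - U_(a))%MM = 0%MM by apply/mnmP => i; rewrite !mnmE subnn.
by rewrite mpolyX0 scale1r.
Qed.

End PartialDerivatives.

Section FlatCoordinates.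
Variables (C : numFieldType) (n : nat).
Local Notation R := {mpoly C[n]}.

(* [1 + z genu] is the generating polynomial [sum_k u_k z^k] of the
   coordinates of the orbit space. *)
Definition genu : {poly R} := \sum_(a < n) ('X_a)%:P * 'X^a.

Local Notation Y := (Y genu).
Local Notation trunc_pow := (trunc_pow (@mpolyC n C) genu).
Local Notation trunc_pow_prim := (trunc_pow_prim (@mpolyC n C) genu).

Lemma pderiv_genu (a : 'I_n) : pderiv a genu = 'X^a.
Proof.
rewrite /genu pderiv_sum (bigD1 a) //= big1 => [|b neq_ba];
  rewrite pderivM pderivXn pderivC mderivXU mulr0 addr0 ?eqxx ?polyC1 ?mul1r ?addr0 //.
by rewrite (negbTE neq_ba) mul0r.
Qed.

Lemma pderivY (a : 'I_n) : pderiv a Y = 'X^(a.+1).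
Proof. by rewrite /Y pderivM pderiv_genu -[X in pderiv a X]expr1 pderivXn mul0r add0r exprS. Qed.

Lemma pderiv_trunc_pow_prim (a : 'I_n) al N :
  pderiv a (trunc_pow_prim al N) = 'X^(a.+1) * trunc_pow al N.
Proof.
rewrite /trunc_pow_prim /trunc_pow pderiv_sum mulr_sumr; apply: eq_bigr => j _.
rewrite pderivM pderivC mderivC polyC0 mul0r add0r pderiv_exp pderivY.
have j1_neq0 : (j.+1%:R : C) != 0 by rewrite pnatr_eq0.
by rewrite mulrnAr -mulrnAl -rmorphMn -mulr_natr divfK // mulrCA.
Qed.

Definition alpha (i : 'I_n) : C := (i.+1%:R - n%:R) / (n - 1)%:R.

Definition flatT (i : 'I_n) : R := (trunc_pow_prim (alpha i) n.+1)`_i.+1.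

Definition Qeta : {poly R} := Qc (@mpolyC n C) genu (n - 1)%:R^-1.

Lemma mderiv_flatT (a i : 'I_n) :
  mderiv a (flatT i) = ('X^(a.+1) * trunc_pow (alpha i) n.+1)`_i.+1.
Proof. by rewrite /flatT -coef_pderiv pderiv_trunc_pow_prim. Qed.

Lemma coef_genu k : genu`_k = \sum_(a < n) 'X_a * (k == a)%:R.
Proof. by rewrite /genu coef_sum; apply: eq_bigr => a _; rewrite coefCM coefXn. Qed.

Lemma coef0_Qeta : Qeta`_0 = 1.
Proof. by rewrite /Qeta /Qc coefB coef0E coefCM coefXM mulr0 subr0. Qed.

Lemma coefS_Qeta m : Qeta`_m.+1 = (1 - m.+1%:R / (n - 1)%:R)%:MP * genu`_m.
Proof.
rewrite /Qeta /Qc coefB coefCM coefXM /= coef_deriv /E coefD coef1 /= add0r /Y coefXM /=.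
rewrite rmorphB rmorph1 mulrBl mul1r [m.+1%:R / _]mulrC rmorphM rmorph_nat.
by rewrite -mulrA mulr_natl.
Qed.

Lemma etaU_coef (n_gt1 : (1 < n)%N) (a b : 'I_n) :
  etaU C a b = ('X^(n.+1) * Qeta)`_(a.+1 + b.+1).
Proof.
have n1_neq0 : (n - 1)%:R != 0 :> C by rewrite pnatr_eq0; lia.
have lt_an := ltn_ord a; have lt_bn := ltn_ord b.
rewrite /etaU /uShift coefXnM -[(a.+1 + b.+1 <= n)%N]ltnS.
case: (ltngtP (a.+1 + b.+1) n.+1) => [lt_abn|gt_abn|eq_abn].
- by rewrite scaler0.
- have [m def_m] : exists m, (a.+1 + b.+1 - n.+1 = m.+1)%N.
    by exists (a.+1 + b.+1 - n.+2)%N; lia.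
  rewrite def_m coefS_Qeta coef_genu -mul_mpolyC big_mkcond.
  congr (_%:MP * _).
    have -> : (2 * n - (a.+1 + b.+1) = (n - 1) - m.+1)%N by lia.
    by rewrite natrB; [field | lia].
  apply: eq_bigr => c _.
  have -> : (c + n.+2 == a.+1 + b.+1)%N = (m == c) by apply/eqP/eqP; lia.
  by case: eqP; rewrite ?mulr1 ?mulr0.
- rewrite eq_abn subnn coef0_Qeta (_ : 2 * n - n.+1 = n - 1)%N; last by lia.
  by rewrite divff ?scale1r.
Qed.

Lemma etaT_flatT (n_gt1 : (1 < n)%N) (i j : 'I_n) :
  etaT flatT i j = ((i + j == n.-1)%N)%:R.
Proof.
have n1_neq0 : (n - 1)%:R != 0 :> C by rewrite pnatr_eq0; lia.
have lt_in := ltn_ord i; have lt_jn := ltn_ord j.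
rewrite /etaT.
under eq_bigr => a _ do under eq_bigr => b _ do rewrite !mderiv_flatT etaU_coef //.
rewrite sum_coefXnM_triple; case: ltnP => [lt_ijn|le_nij].
  suff /negbTE -> : (i + j != n.-1)%N by [].
  lia.
rewrite coef_trunc_pow2_Qc; last 2 first.
- lia.
- have n1E : ((n - 1)%:R : C) = n%:R - 1 by rewrite natrB //; lia.
  rewrite /alpha n1E natrB; last by lia.
  by rewrite !natrD -!natr1; field; rewrite -n1E.
by congr (_%:R); apply/eqP/eqP; lia.
Qed.

End FlatCoordinates.

Section WeightedGrading.
Variables (C : numFieldType) (n : nat).
Local Notation R := {mpoly C[n]}.
Local Notation cst := (polyC \o @mpolyC n C).
Local Notation Y := (Y (genu C n)).
Local Notation flatT := (@flatT C n).

Definition wgraded (p : {poly R}) := forall k, p`_k \is k.-homog for mnmwgt.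

Lemma wgraded_sum (I : Type) (r : seq I) (F : I -> {poly R}) :
  (forall i, wgraded (F i)) -> wgraded (\sum_(i <- r) F i).
Proof. by move=> gradedF k; rewrite coef_sum; apply: rpred_sum => i _; apply: gradedF. Qed.

Lemma wgradedM p q : wgraded p -> wgraded q -> wgraded (p * q).
Proof.
move=> gp gq k; rewrite coefM; apply: rpred_sum => j _.
by have := dhomogM (gp j) (gq (k - j)%N); rewrite subnKC // -ltnS.
Qed.

Lemma wgradedC (c : C) : wgraded (cst c).
Proof.
move=> [|k]; rewrite coefC /=; last exact: rpred0.
by rewrite -[c%:MP]mulr1 mul_mpolyC; apply/dhomogZ/dhomog1.
Qed.

Lemma wgradedX p j : wgraded p -> wgraded (p ^+ j).
Proof.
move=> gp; elim: j => [|j IH]; last by rewrite exprS; apply: wgradedM.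
by rewrite expr0 -(rmorph1 cst); apply: wgradedC.
Qed.

Lemma wgradedY : wgraded Y.
Proof.
move=> [|k]; first by rewrite coef0Y; apply: rpred0.
rewrite /Y coefXM /= coef_genu; apply: rpred_sum => a _.
case: eqP => [->|_]; last by rewrite mulr0; apply: rpred0.
by rewrite mulr1 dhomogX; apply/eqP; apply: mnmwgt1.
Qed.

Lemma flatT_wgt_homog (k : 'I_n) : flatT k \is k.+1.-homog for mnmwgt.
Proof.
rewrite /flatT /trunc_pow_prim; apply: wgraded_sum => j.
by apply: wgradedM; [apply: wgradedC | apply/wgradedX/wgradedY].
Qed.

Lemma coefU_flatT (k : 'I_n) : (flatT k)@_U_(k) = 1.
Proof.
have := congr1 (mcoeff 0%MM) (mderiv_flatT C k k).
rewrite mcoeff_deriv add0m mnm0E mulr1n => ->.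
by rewrite coefXnM ltnn subnn coef0_trunc_pow mcoeff1 eqxx.
Qed.

End WeightedGrading.

Section TriangularInverse.
Variables (K : comNzRingType) (n : nat).
Local Notation R := {mpoly K[n]}.

Definition vars_below (k : nat) (p : R) :=
  forall m, m \in msupp p -> forall j : 'I_n, (k <= j)%N -> m j = 0%N.

Lemma comp_mpolyA (k l : nat) (p : R) (lq : n.-tuple {mpoly K[k]})
    (lr : k.-tuple {mpoly K[l]}) :
  (p \mPo lq) \mPo lr = p \mPo [tuple tnth lq i \mPo lr | i < n].
Proof.
rewrite [p \mPo lq]comp_mpolyE [in RHS]comp_mpolyE raddf_sum /=.
apply: eq_bigr => m _; rewrite linearZ /= rmorph_prod; congr (_ *: _).
by apply: eq_bigr => i _; rewrite rmorphXn tnth_mktuple.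
Qed.

Lemma comp_mpoly_vars_below k (p : R) (lq lq' : n.-tuple R) : vars_below k p ->
  (forall j : 'I_n, (j < k)%N -> tnth lq j = tnth lq' j) -> p \mPo lq = p \mPo lq'.
Proof.
move=> p_below eq_lq; rewrite !comp_mpolyE; apply: eq_big_seq => m m_supp.
congr (_ *: _); apply: eq_bigr => i _; case: (ltnP i k) => [lt_ik|le_ki].
  by rewrite eq_lq.
by rewrite (p_below m m_supp i le_ki) !expr0.
Qed.

Variable T : 'I_n -> R.
Hypothesis T_triangular : forall k : 'I_n, vars_below k (T k - 'X_k).

Fixpoint triangular_inv (k : nat) : 'I_n -> R :=
  if k is k'.+1 then fun i =>
    if i == k' :> nat then 'X_i - ((T i - 'X_i) \mPo [tuple triangular_inv k' j | j < n])
    else triangular_inv k' i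
  else fun i => 'X_i.

(* Only [U_0, ..., U_(i-1)] enter [(T_i - X_i) \mPo U], and they invert [T] by
   induction. *)
Lemma triangular_invP k (i : 'I_n) : (i < k)%N ->
  triangular_inv k i \mPo [tuple T j | j < n] = 'X_i.
Proof.
elim: k i => [|k IH] i lt_ik //=.
case: eqP => [eq_ik|neq_ik] /=; last by apply: IH; lia.
rewrite comp_mpolyB comp_mpolyXU -tnth_nth tnth_mktuple comp_mpolyA.
rewrite (comp_mpoly_vars_below (lq' := [tuple 'X_j | j < n]) (@T_triangular i)).
  by rewrite comp_mpoly_id opprB addrC subrK.
by move=> j lt_ji; rewrite !tnth_mktuple IH //; lia.
Qed.

Lemma triangular_inverse :
  exists U : 'I_n -> R, forall k, U k \mPo [tuple T i | i < n] = 'X_k.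
Proof. by exists (triangular_inv n) => k; apply: triangular_invP. Qed.

End TriangularInverse.

Lemma mnmwgt_vars_below (n : nat) (k : 'I_n) (m : 'X_{1..n}) :
  mnmwgt m = k.+1 -> m != U_(k)%MM -> forall j : 'I_n, (k <= j)%N -> m j = 0%N.
Proof.
move=> wgt_m neq_mk j le_kj; apply/eqP; apply: contraR neq_mk => mj_neq0.
have wgt_split := wgt_m; rewrite /mnmwgt (bigD1 j) //= in wgt_split.
have le_wgt : (j.+1 <= m j * j.+1)%N by rewrite leq_pmull // lt0n.
have eq_jk : j = k :> nat by lia.
have mj1 : m j = 1%N by nia.
have rest0 : (\sum_(i < n | i != j) m i * i.+1 = 0)%N.
  by move: wgt_split; rewrite mj1 mul1n eq_jk -[RHS]addn0 => /addnI.
have -> : k = j by apply: val_inj.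
apply/eqP/mnmP => i; rewrite mnm1E.
case: (eqVneq j i) => [<-|neq_ji]; first by rewrite mj1.
move/eqP: rest0; rewrite sum_nat_eq0 => /forallP /(_ i).
by rewrite eq_sym neq_ji muln_eq0 orbF => /eqP.
Qed.

Lemma flatT_triangular (C : numFieldType) (n : nat) (k : 'I_n) :
  vars_below k (flatT C k - 'X_k).
Proof.
move=> m; rewrite mcoeff_msupp mcoeffB mcoeffX => m_supp.
have neq_mk : m != U_(k)%MM.
  by apply: contra m_supp => /eqP ->; rewrite coefU_flatT eqxx subrr.
move: m_supp; rewrite (eq_sym U_(k)%MM) (negbTE neq_mk) subr0 -mcoeff_msupp => m_supp.
exact: mnmwgt_vars_below (dhomog_mf (flatT_wgt_homog C k) m_supp) neq_mk.
Qed.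

Section OrbitSpace.
Variables (K : comNzRingType) (n : nat).
Local Notation R := {mpoly K[n]}.
Local Notation squares := [tuple ('X_i ^+ 2 : R) | i < n].

Lemma uTupleE :
  uTuple K n = [tuple tnth [tuple mesym n K i.+1 | i < n] i \mPo squares | i < n].
Proof. by apply: eq_from_tnth => i; rewrite !tnth_mktuple. Qed.

Lemma Bn_act_uB (s : 'S_n) (e : 'I_n -> bool) (k : 'I_n) :
  Bn_act s e (uB K k) = uB K k.
Proof.
rewrite /Bn_act /uB comp_mpolyA.
have -> : [tuple tnth squares j \mPo [tuple ((-1) ^+ e i *: 'X_(s i) : R) | i < n] | j < n] =
          [tuple tnth squares (s j) | j < n].
  apply: eq_from_tnth => j; rewrite !tnth_mktuple rmorphXn /= comp_mpolyXU -tnth_nth.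
  by rewrite tnth_mktuple exprZn sqrr_sign scale1r.
by rewrite -msym_mPo (issymP _ (mesym_sym n K k.+1)).
Qed.

Lemma Bn_act_comp_uTuple (s : 'S_n) (e : 'I_n -> bool) (p : R) :
  Bn_act s e (p \mPo uTuple K n) = p \mPo uTuple K n.
Proof.
rewrite /Bn_act comp_mpolyA; apply: (congr1 (fun lq : n.-tuple R => p \mPo lq)).
by apply: eq_from_tnth => j; rewrite !tnth_mktuple; apply: Bn_act_uB.
Qed.

Lemma dhomog_comp_squaresX (m : 'X_{1..n}) : 'X_[m] \mPo squares \is (2 * mdeg m).-homog.
Proof.
rewrite comp_mpolyX mdegE big_distrr /=.
apply: (big_ind2 (fun (q : R) (d : nat) => q \is d.-homog)) => [|q1 d1 q2 d2|i _].
- exact: dhomog1.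
- exact: dhomogM.
have X_homog : ('X_i : R) \is 1.-homog by rewrite dhomogX; apply/eqP; apply: mdeg1.
by rewrite tnth_mktuple; have := dhomogMn (m i) (dhomogMn 2 X_homog); rewrite mul1n.
Qed.

Lemma dhomog_comp_squares d (p : R) : p \is d.-homog -> p \mPo squares \is (2 * d).-homog.
Proof.
move=> p_homog; rewrite comp_mpolyEX big_seq; apply: rpred_sum => m m_supp.
by apply: dhomogZ; rewrite -(dhomog_mf p_homog m_supp); apply: dhomog_comp_squaresX.
Qed.

Lemma dhomog_comp_uTuple d (p : R) :
  p \is d.-homog for mnmwgt -> p \mPo uTuple K n \is (2 * d).-homog.
Proof. by rewrite uTupleE -comp_mpolyA mwmwgt_homogE; apply: dhomog_comp_squares. Qed.

End OrbitSpace.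

Unset Implicit Arguments.

Theorem mainTheorem13 (C : numClosedFieldType) (n : nat) (hn : (2 <= n)%N) :
  exists t : 'I_n -> {mpoly C[n]},
    (* B_n-invariant *)
    (forall (k : 'I_n) (s : 'S_n) (e : 'I_n -> bool), Bn_act s e (t k) = t k) /\
    (* homogeneous, deg t_(k+1) = 2(k+1) *)
    (forall k : 'I_n, t k \is (2 * k.+1)%N.-homog) /\
    (* coordinate system on the orbit space: t = T(u) and u = U(t), polynomially *)
    exists (T U : 'I_n -> {mpoly C[n]}),
      (forall k : 'I_n, t k = comp_mpoly (uTuple C n) (T k)) /\
      (forall k : 'I_n, uB C k = comp_mpoly [tuple t i | i < n] (U k)) /\
      (* eta^{ij}(t) = delta_{i, n+1-j} (0-based: i + j = n - 1) *)
      (forall i j : 'I_n, etaT T i j = ((i + j == n.-1)%N)%:R).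
Proof.
have [U flatT_inv] := triangular_inverse (@flatT_triangular C n).
exists (fun k => flatT C k \mPo uTuple C n); split.
  by move=> k s e; apply: Bn_act_comp_uTuple.
split; first by move=> k; apply/dhomog_comp_uTuple/flatT_wgt_homog.
exists (@flatT C n), U; split=> //; split; last exact: (etaT_flatT C hn).
move=> k; rewrite [RHS](_ : _ = (U k \mPo [tuple flatT C i | i < n]) \mPo uTuple C n).
  by rewrite flatT_inv comp_mpolyXU -tnth_nth tnth_mktuple.
rewrite comp_mpolyA; apply: (congr1 (fun lq : n.-tuple {mpoly C[n]} => U k \mPo lq)).
by apply: eq_from_tnth => i; rewrite !tnth_mktuple.
Qed.
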